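(* Let $q$ be an odd prime power, $d$ a positive integer, and $\varphi_d$ the coloring defined below. Let $A,B \subseteq (\mathbb{F}_q^* )^d$ be disjoint sets of vectors and $\alpha \in C_d$ a color such that $\varphi_d(a,b) = \alpha$ for all $a \in A$ and $b\in B$. Then $A$ confines $B$ or $B$ confines $A$ (or both).
   Context: $\mathbb{F}_q^*$ is the set of nonzero elements of $\mathbb{F}_q$, endowed with an arbitrary fixed linear order; $(\mathbb{F}_q^* )^d$ is ordered lexicographically with respect to it. Let $C_d = \mathrm{DOT} \sqcup \mathrm{ZERO}\sqcup\mathrm{UP}\sqcup\mathrm{DOWN}$, where $\mathrm{DOT} = \mathbb{F}_q^*$ and ZERO, UP, DOWN are three disjoint copies of $\{1,\dots,d\}\times \mathbb{F}_q$. For distinct $x<y$ in $(\mathbb{F}_q^* )^d$, let $i$ be the first coordinate where $x$ and $y$ differ, and $x\cdot y$ the standard dot product; $\varphi_d(x,y)=\varphi_d(y,x)$ is $(i,x_i+y_i)$ in ZERO if $x\cdot y=0$; $(i,x_i+y_i)$ in UP if $x\cdot y\ne 0$ and $x\cdot y=x\cdot x$; $(i,x_i+y_i)$ in DOWN if $x\cdot y\notin\{0,x\cdot x\}$ and $x\cdot y=y\cdot y$; and $x\cdot y\in\mathrm{DOT}$ otherwise. $A$ confines $B$ means: for each $a \in A$, $a\cdot x = a\cdot y$ for all $x,y \in B$. *)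

From HB Require Import structures.
From mathcomp Require Import all_boot all_order all_algebra all_field.
Set Implicit Arguments. Unset Strict Implicit. Unset Printing Implicit Defensive.
Import GRing.Theory.
Local Open Scope ring_scope.

(* Vectors of F^d are finite functions 'I_d -> F (coordinate i is 0-based). *)
Notation vec F d := {ffun 'I_d -> F}.

Definition dotv (F : fieldType) (d : nat) (x y : vec F d) : F :=
  \sum_(i < d) x i * y i.

Definition nzvec (F : fieldType) (d : nat) (x : vec F d) : bool :=
  [forall i, x i != 0].

Definition lin_order_nz (F : fieldType) (lt : rel F) : Prop :=
  [/\ (forall x, x != 0 -> ~~ lt x x),
      (forall x y z, x != 0 -> y != 0 -> z != 0 -> lt x y -> lt y z -> lt x z) &
      (forall x y, x != 0 -> y != 0 -> x != y -> lt x y || lt y x)].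

Definition firstdiff (F : fieldType) (d : nat) (x y : vec F d) : option 'I_d :=
  [pick i | (x i != y i) && [forall j : 'I_d, (j < i)%N ==> (x j == y j)]].

Definition lexlt (F : fieldType) (lt : rel F) (d : nat) (x y : vec F d) : bool :=
  if firstdiff x y is Some i then lt (x i) (y i) else false.

(* The color set C_d = DOT ⊔ ZERO ⊔ UP ⊔ DOWN; DOT holds the (nonzero) dot product. *)
Inductive color (F : fieldType) (d : nat) : Type :=
| DOT of F
| ZERO of 'I_d & F
| UP of 'I_d & F
| DOWN of 'I_d & F.

(* the coloring for x < y (lexicographically) *)
Definition phi_ord (F : fieldType) (d : nat) (x y : vec F d) : color F d :=
  if firstdiff x y is Some i then
    let s := x i + y i in
    let xy := dotv x y in
    if xy == 0 then ZERO i s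
    else if xy == dotv x x then UP i s
    else if xy == dotv y y then DOWN i s
    else DOT d xy
  else DOT d (dotv x y) (* unreachable for distinct x, y *).

Definition phi (F : fieldType) (lt : rel F) (d : nat) (x y : vec F d) : color F d :=
  if lexlt lt x y then phi_ord x y else phi_ord y x.

Definition confines (F : finFieldType) (d : nat) (A B : {set vec F d}) : Prop :=
  forall a, a \in A -> forall x y, x \in B -> y \in B -> dotv a x = dotv a y.

(* If the common color is DOT c or ZERO (i, s), then a.b does not depend on
   (a, b) at all.  If it is UP (i, s) or DOWN (i, s), then i is the first
   coordinate where a and b differ and a_i + b_i = s for all pairs; hence a_i
   is constant on A and b_i is constant on B, so every pair is ordered the same
   way.  The color then says that a.b = a.a for all pairs (A confines B) or
   that a.b = b.b for all pairs (B confines A). *)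

From HB Require Import structures.
From mathcomp Require Import all_boot all_order all_algebra all_field.
Local Open Scope ring_scope.
Import GRing.Theory.
Set Implicit Arguments. Unset Strict Implicit.

Section Coloring.
Variables (F : fieldType) (d : nat).
Implicit Types (x y a b : vec F d).

Lemma dotvC x y : dotv x y = dotv y x.
Proof. by apply: eq_bigr => i _; rewrite mulrC. Qed.

Lemma firstdiffC x y : firstdiff x y = firstdiff y x.
Proof.
apply: eq_pick => k /=; rewrite eq_sym; congr (_ && _).
by apply: eq_forallb => j; rewrite eq_sym.
Qed.

Lemma lexlt_firstdiff (lt : rel F) x y i :
  firstdiff x y = Some i -> lexlt lt x y = lt (x i) (y i).
Proof. by rewrite /lexlt => ->. Qed.

Lemma phi_ord_DOT x y c : phi_ord x y = DOT d c -> dotv x y = c.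
Proof.
rewrite /phi_ord; case: (firstdiff x y) => [i|[]//].
by do 3 case: ifP => _ //; case.
Qed.

Lemma phi_ord_ZERO x y i s : phi_ord x y = ZERO i s -> dotv x y = 0.
Proof.
rewrite /phi_ord; case: (firstdiff x y) => // j.
by case: ifP => [/eqP|_] //; do 2 case: ifP => _ //.
Qed.

Lemma phi_ord_UP x y i s : phi_ord x y = UP i s ->
  [/\ firstdiff x y = Some i, x i + y i = s & dotv x y = dotv x x].
Proof.
rewrite /phi_ord; case: (firstdiff x y) => // j.
case: ifP => _ //; case: ifP => [/eqP -> [-> <-] //|_].
by case: ifP.
Qed.

Lemma phi_ord_DOWN x y i s : phi_ord x y = DOWN i s ->
  [/\ firstdiff x y = Some i, x i + y i = s & dotv x y = dotv y y].
Proof.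
rewrite /phi_ord; case: (firstdiff x y) => // j.
by do 2 case: ifP => _ //; case: ifP => [/eqP -> [-> <-]|_].
Qed.

Variable lt : rel F.

Lemma phi_DOT a b c : phi lt a b = DOT d c -> dotv a b = c.
Proof.
rewrite /phi; case: ifP => _; first exact: phi_ord_DOT.
by move/phi_ord_DOT; rewrite dotvC.
Qed.

Lemma phi_ZERO a b i s : phi lt a b = ZERO i s -> dotv a b = 0.
Proof.
rewrite /phi; case: ifP => _; first exact: phi_ord_ZERO.
by move/phi_ord_ZERO; rewrite dotvC.
Qed.

Lemma phi_UP a b i s : phi lt a b = UP i s ->
  a i + b i = s /\
  (if lt (a i) (b i) then dotv a b = dotv a a else dotv b a = dotv b b).
Proof.
rewrite /phi; case: ifP => ab /phi_ord_UP [fd sum dot].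
  by rewrite -(lexlt_firstdiff lt fd) ab.
by rewrite addrC -(lexlt_firstdiff lt (etrans (firstdiffC a b) fd)) ab.
Qed.

Lemma phi_DOWN a b i s : phi lt a b = DOWN i s ->
  a i + b i = s /\
  (if ~~ lt (a i) (b i) then dotv a b = dotv a a else dotv b a = dotv b b).
Proof.
rewrite /phi; case: ifP => ab /phi_ord_DOWN [fd sum dot].
  by rewrite -(lexlt_firstdiff lt fd) ab /= dotvC.
by rewrite addrC -(lexlt_firstdiff lt (etrans (firstdiffC a b) fd)) ab /= dotvC.
Qed.

End Coloring.

Section Confinement.
Variables (F : finFieldType) (d : nat).
Implicit Types A B : {set vec F d}.

Lemma confines_of_dotv A B (f : vec F d -> F) :
  (forall a b, a \in A -> b \in B -> dotv a b = f a) -> confines A B.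
Proof. by move=> dotAB a aA x y xB yB; rewrite !dotAB. Qed.

Lemma confines_of_pivot A B (r : rel F) (i : 'I_d) (s : F) :
  (forall a b, a \in A -> b \in B -> a i + b i = s) ->
  (forall a b, a \in A -> b \in B ->
     if r (a i) (b i) then dotv a b = dotv a a else dotv b a = dotv b b) ->
  confines A B \/ confines B A.
Proof.
move=> sumAB dotAB.
have [a0 a0A|A0] := pickP [in A]; last by left=> a; rewrite A0.
have [b0 b0B|B0] := pickP [in B]; last by right=> b; rewrite B0.
have r_const a b : a \in A -> b \in B -> r (a i) (b i) = r (a0 i) (b0 i).
  move=> aA bB; congr (r _ _).
    by apply: (addIr (b0 i)); rewrite !sumAB.
  by apply: (addrI (a0 i)); rewrite !sumAB.
case r0: (r (a0 i) (b0 i)); [left | right].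
  apply: (confines_of_dotv (f := fun a => dotv a a)) => a b aA bB.
  by have := dotAB a b aA bB; rewrite r_const // r0.
apply: (confines_of_dotv (f := fun b => dotv b b)) => b a bB aA.
by have := dotAB a b aA bB; rewrite r_const // r0 dotvC.
Qed.

End Confinement.

Theorem lemma3p8 (F : finFieldType) (lt : rel F) (d : nat)
  (A B : {set {ffun 'I_d -> F}}) (alpha : color F d) :
  odd #|F| ->
  lin_order_nz lt ->
  (0 < d)%N ->
  (forall x, x \in A -> nzvec x) ->
  (forall x, x \in B -> nzvec x) ->
  [disjoint A & B] ->
  (forall a b, a \in A -> b \in B -> phi lt a b = alpha) ->
  confines A B \/ confines B A.
Proof.
move=> _ _ _ _ _ _ mono.
case: alpha mono => [c|i s|i s|i s] mono.
- left; apply: (confines_of_dotv (f := fun=> c)) => a b aA bB.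
  exact: phi_DOT (mono a b aA bB).
- left; apply: (confines_of_dotv (f := fun=> 0)) => a b aA bB.
  exact: phi_ZERO (mono a b aA bB).
- apply: (confines_of_pivot (r := lt) (i := i) (s := s)) => a b aA bB;
    by case: (phi_UP (mono a b aA bB)).
- apply: (confines_of_pivot (r := fun x y => ~~ lt x y) (i := i) (s := s)) => a b aA bB;
    by case: (phi_DOWN (mono a b aA bB)).
Qed.
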